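(* Let $X=(x_t,t\ge 0)$ and $Y=(y_t,t\ge0)$ be real-valued stochastic processes with continuous paths on a probability space $(\Omega,\mathcal F,\mathbb P)$. Assume $Y$ is strictly stationary and ergodic, and that $|x_t-y_t|\to 0$ almost surely as $t\to\infty$. Let $p\ge 1$ be an integer and $g\in\mathcal C^p(\mathbb R)$ with $k$-th derivative $g^{(k)}$, such that $\mathbb E|g^{(k)}(y_0)|<\infty$ for $k=0,1,\dots,p$, and $g^{(p)}$ is globally Lipschitz. Then $$\frac1T\int_0^T g(x_t)\,dt \longrightarrow \mathbb E\, g(y_0)\quad\text{almost surely as } T\to\infty.$$
   Context: ''Strictly stationary and ergodic'' is used in the sense that for every measurable $\varphi:\mathbb R\to\mathbb R$ with $\mathbb E|\varphi(y_0)|<\infty$ one has $\frac1T\int_0^T\varphi(y_t)\,dt\to\mathbb E\varphi(y_0)$ almost surely. *)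

From HB Require Import structures.
From mathcomp Require Import all_boot all_order all_algebra.
From mathcomp Require Import all_classical all_reals all_analysis.
Set Implicit Arguments. Unset Strict Implicit. Unset Printing Implicit Defensive.
Import Order.TTheory GRing.Theory Num.Theory.
Import numFieldNormedType.Exports.
Local Open Scope classical_set_scope.
Local Open Scope ring_scope.

Definition time_avg (R : realType) (f : R -> R) (T : R) : R :=
  T^-1 * Rintegral (@lebesgue_measure R) `[0, T] f.

(* "Y strictly stationary and ergodic", in the sense fixed by the paper:
   for every measurable phi with E|phi(y_0)| < oo, the time averages of
   phi(y_t) converge almost surely to E phi(y_0). *)
Definition stationary_ergodic (d : measure_display) (Omega : measurableType d)
  (R : realType) (P : probability Omega R) (Y : R -> Omega -> R) : Prop :=
  forall phi : R -> R, measurable_fun setT phi ->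
    P.-integrable setT (fun w => (phi (Y 0 w))%:E) ->
    {ae P, forall w, time_avg (fun t => phi (Y t w)) T @[T --> +oo] -->
                     Rintegral P setT (fun w' => phi (Y 0 w'))}.

Definition Cp (R : realType) (p : nat) (g : R -> R) : Prop :=
  (forall k : nat, (k < p)%N -> forall x : R, derivable (derive1n k g) x 1) /\
  continuous (derive1n p g).

Definition lipschitz_glob (R : realType) (f : R -> R) : Prop :=
  exists L : R, forall a b : R, `|f a - f b| <= L * `|a - b|.

From HB Require Import structures.
From mathcomp Require Import all_boot all_order all_algebra.
From mathcomp Require Import all_classical all_reals all_analysis.
From mathcomp Require Import ring lra.
Set Implicit Arguments. Unset Strict Implicit. Unset Printing Implicit Defensive.
Import Order.TTheory GRing.Theory Num.Theory.
Import numFieldNormedType.Exports.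
Local Open Scope classical_set_scope.
Local Open Scope ring_scope.

(* When |x - y| <= 1, applying the mean value theorem p times and then the
   Lipschitz bound on g^(p) gives |g x - g y| <= |x - y| (S y + L), with
   S = sum_{k=1}^p |g^(k)|.  Along a path with |x_t - y_t| -> 0 the integrand
   of the difference of the two time averages is therefore eventually
   <= eps (S(y_t) + L); the initial stretch contributes O(1/T), and ergodicity
   applied to g and to S makes the averages of g(y_t) converge to E g(y_0)
   while those of S(y_t) stay bounded. *)

Lemma MVT_norm (R : realType) (f : R -> R) (x y : R) :
  (forall z, derivable f z 1) ->
  exists2 c, `|c - y| <= `|x - y| & `|f x - f y| = `|derive1 f c| * `|x - y|.
Proof.
move=> df.
have cf : continuous f.
  by move=> z; apply: differentiable_continuous; apply/derivable1_diffP.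
have dv (z : R) : is_derive z 1 f (derive1 f z).
  by rewrite derive1E; apply: derivableP.
have [xy|yx|->] := ltgtP x y.
- have [c + fxy] := MVT xy (fun z _ => dv z) (continuous_subspaceT cf).
  rewrite in_itv /= => /andP[xc cy]; exists c.
    by rewrite !ltr0_norm ?subr_lt0 //; lra.
  by rewrite distrC fxy normrM distrC.
- have [c + fyx] := MVT yx (fun z _ => dv z) (continuous_subspaceT cf).
  rewrite in_itv /= => /andP[yc cx]; exists c.
    by rewrite !gtr0_norm ?subr_gt0 //; lra.
  by rewrite fyx normrM.
- by exists y; rewrite ?subrr ?normr0 ?mulr0.
Qed.

Lemma lipschitz_derive1n_norm_subr_le (R : realType) (L : R) (m : nat)
    (f : R -> R) (x y : R) :
  0 <= L ->
  (forall k, (k < m)%N -> forall z, derivable (derive1n k f) z 1) ->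
  (forall a b, `|derive1n m f a - derive1n m f b| <= L * `|a - b|) ->
  `|x - y| <= 1 ->
  `|f x - f y| <= `|x - y| * (\sum_(0 <= k < m) `|derive1n k.+1 f y| + L).
Proof.
move=> L0; elim: m f x => [|m IHm] f x df lipf xy1.
  by rewrite big_geq // add0r mulrC; exact: lipf.
have [c cy fxy] := @MVT_norm R f x y (df 0%N isT).
have cy1 : `|c - y| <= 1 := le_trans cy xy1.
have df' k : (k < m)%N -> forall z, derivable (derive1n k (derive1 f)) z 1.
  by move=> km z; rewrite -derive1Sn; exact: df.
have lipf' a b : `|derive1n m (derive1 f) a - derive1n m (derive1 f) b| <= L * `|a - b|.
  by rewrite -derive1Sn; exact: lipf.
have IH := IHm _ c df' lipf' cy1.
rewrite fxy [X in X <= _]mulrC; apply: ler_wpM2l => //.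
rewrite big_nat_recl //; under eq_bigr do rewrite derive1Sn.
set S := \sum_(0 <= i < m) _ in IH *.
rewrite derive1n1 -addrA.
have S0 : 0 <= S + L by rewrite addr_ge0 // sumr_ge0.
have : `|c - y| * (S + L) <= S + L by rewrite ler_piMl.
have := ler_normD (derive1 f c - derive1 f y) (derive1 f y); rewrite subrK.
lra.
Qed.

Lemma continuous_sum (R : realType) (h : nat -> R -> R) (n : nat) :
  (forall k, (k < n)%N -> continuous (h k)) ->
  continuous (fun y => \sum_(0 <= k < n) h k y).
Proof.
elim: n => [_|n IHn hc].
  by under eq_fun do rewrite big_geq //; exact: cst_continuous.
under eq_fun do rewrite big_nat_recr //.
move=> x; apply: continuousD; last exact: hc.
by apply: IHn => k kn; apply: hc; rewrite ltnS ltnW.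
Qed.

Lemma Cp_continuous_derive1n (R : realType) (p k : nat) (g : R -> R) :
  Cp p g -> (k <= p)%N -> continuous (derive1n k g).
Proof.
move=> [dg cgp]; rewrite leq_eqVlt => /predU1P[-> //|kp] x.
by apply: differentiable_continuous; apply/derivable1_diffP; exact: dg.
Qed.

Lemma integrable_sum_norm d (T : measurableType d) (R : realType)
    (mu : {measure set T -> \bar R}) (D : set T) (f : nat -> T -> R) (n : nat) :
  measurable D -> (forall k, (k < n)%N -> mu.-integrable D (EFin \o f k)) ->
  mu.-integrable D (fun w => (\sum_(0 <= k < n) `|f k w|)%:E).
Proof.
move=> mD fi.
have : mu.-integrable D (fun w => \sum_(0 <= k < n | (k < n)%N) (`|f k w|)%:E)%E.
  by apply: integrable_sum => // k kn; exact: integrable_norm (fi k kn).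
apply: eq_integrable => // w _; rewrite sumEFin; congr EFin.
rewrite big_nat_cond [RHS]big_nat_cond; apply: eq_bigl => k.
by rewrite andbT -andbA andbb.
Qed.

Local Notation mu := lebesgue_measure.

Lemma itv_measurable (R : realType) (i : interval R) :
  measurable ([set` i] : set (measurableTypeR R)).
Proof. by []. Qed.

Lemma continuous_itv_integrable (R : realType) (f : R -> R) (T : R) :
  {within `[0, +oo[, continuous f} -> mu.-integrable `[0, T] (EFin \o f).
Proof.
move=> cf; apply: continuous_compact_integrable; first exact: segment_compact.
apply: continuous_subspaceW cf => x /=; rewrite !in_itv /= => /andP[-> _] //.
Qed.

Lemma cst_itv_integrable (R : realType) (k T : R) : mu.-integrable `[0, T] (EFin \o cst k).
Proof. exact/continuous_itv_integrable/continuous_subspaceT/cst_continuous. Qed.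

Lemma Rintegral_cst_itv (R : realType) (T k : R) : 0 <= T -> \int[mu]_(x in `[0, T]) k = k * T.
Proof.
move=> T0; rewrite Rintegral_cst //= lebesgue_measure_itv /= lte_fin.
move: T0; rewrite le_eqVlt => /predU1P[<-|T0]; first by rewrite ltxx /= mulr0.
by rewrite T0 /= oppr0 addr0.
Qed.

Lemma Rintegral_itv_split_le (R : realType) (f h : R -> R) (t0 T : R) :
  mu.-integrable `[0, T] (EFin \o f) -> mu.-integrable `[0, T] (EFin \o h) ->
  0 <= t0 -> t0 <= T ->
  (forall t, t0 < t -> f t <= h t) -> (forall t, 0 <= h t) ->
  \int[mu]_(t in `[0, T]) f t <= \int[mu]_(t in `[0, t0]) f t + \int[mu]_(t in `[0, T]) h t.
Proof.
move=> fi hi t0_ge0 t0T fh h_ge0.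
have [t0_bnd t0T_bnd] : (BLeft 0 <= BRight t0)%O /\ (BRight t0 <= BRight T)%O.
  by rewrite !bnd_simp t0_ge0.
have split_f := Rintegral_itvB fi t0_bnd t0T_bnd.
have split_h := Rintegral_itvB hi t0_bnd t0T_bnd.
have sub : [set` `]t0, T]] `<=` [set` `[0, T]].
  move=> x /=; rewrite !in_itv /= => /andP[t0x ->].
  by rewrite andbT (le_trans t0_ge0) // ltW.
have tail_le : \int[mu]_(x in `]t0, T]) f x <= \int[mu]_(x in `]t0, T]) h x.
  apply: le_Rintegral => //; [exact: integrableS fi|exact: integrableS hi|].
  by move=> x /=; rewrite in_itv /= => /andP[t0x _]; apply: fh.
have head_ge0 : 0 <= \int[mu]_(x in `[0, t0]) h x by apply: Rintegral_ge0.
rewrite -[X in X <= _](subrK (\int[mu]_(t in `[0, t0]) f t)) split_f addrC lerD2l.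
by apply: le_trans tail_le _; rewrite -split_h lerBlDr lerDl.
Qed.

Lemma time_avg_dist_le (R : realType) (u v s : R -> R) (L eps t0 T : R) :
  mu.-integrable `[0, T] (EFin \o u) -> mu.-integrable `[0, T] (EFin \o v) ->
  mu.-integrable `[0, T] (EFin \o s) ->
  0 <= t0 -> t0 < T -> 0 <= eps -> (forall t, 0 <= s t + L) ->
  (forall t, t0 < t -> `|u t - v t| <= eps * (s t + L)) ->
  `|time_avg u T - time_avg v T| <=
    T^-1 * \int[mu]_(t in `[0, t0]) `|u t - v t| + eps * (time_avg s T + L).
Proof.
move=> ui vi si t0_ge0 t0T eps_ge0 sL_ge0 uv_le.
have T0 : 0 < T by apply: le_lt_trans t0T.
have uvi : mu.-integrable `[0, T] (EFin \o (fun t => u t - v t)).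
  by have := integrableB (itv_measurable _) ui vi; apply: eq_integrable.
have sLi : mu.-integrable `[0, T] (EFin \o (fun t => s t + L)).
  have := integrableD (itv_measurable _) si (cst_itv_integrable L T).
  by apply: eq_integrable.
have epsSi : mu.-integrable `[0, T] (EFin \o (fun t => eps * (s t + L))).
  by have := integrableZl (itv_measurable _) eps sLi; apply: eq_integrable.
have int_epsS : \int[mu]_(t in `[0, T]) (eps * (s t + L)) =
                eps * (\int[mu]_(t in `[0, T]) s t + L * T).
  rewrite RintegralZl // (RintegralD (itv_measurable _) si (cst_itv_integrable L T)).
  by rewrite Rintegral_cst_itv // ltW.
have := Rintegral_itv_split_le (integrable_norm uvi) epsSi
  t0_ge0 (ltW t0T) uv_le (fun t => mulr_ge0 eps_ge0 (sL_ge0 t)).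
rewrite int_epsS /time_avg -mulrBr -RintegralB // normrM gtr0_norm ?invr_gt0 //.
move=> split_le.
have -> : T^-1 * \int[mu]_(t in `[0, t0]) `|u t - v t| +
          eps * (T^-1 * \int[mu]_(t in `[0, T]) s t + L) =
          T^-1 * (\int[mu]_(t in `[0, t0]) `|u t - v t| +
                  eps * (\int[mu]_(t in `[0, T]) s t + L * T)).
  by field; rewrite gt_eqF.
apply: ler_wpM2l; first by rewrite invr_ge0 ltW.
apply: le_trans split_le.
exact: (le_normr_Rintegral (itv_measurable _) uvi).
Qed.

Lemma pinfty_invr_mulr_lt (R : realType) (C e : R) :
  0 < e -> \forall T \near +oo, T^-1 * C < e.
Proof.
move=> e0; near=> T.
have CT : `|C| / e < T by near: T; apply: nbhs_pinfty_gt; rewrite num_real.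
have T0 : 0 < T by apply: le_lt_trans CT; rewrite divr_ge0 // ltW.
rewrite ltr_pdivrMr // in CT; rewrite mulrC ltr_pdivrMr //.
by apply: le_lt_trans (ler_norm C) _; rewrite mulrC.
Unshelve. all: by end_near.
Qed.

Lemma cvg0_pinfty_norm_le (R : realType) (f : R -> R) (eps : R) :
  `|f t| @[t --> +oo] --> 0 -> 0 < eps ->
  exists2 t0 : R, 0 <= t0 & forall t, t0 < t -> `|f t| <= eps.
Proof.
move=> /cvgr0Pnorm_lt f0 eps0; have [M [_ fM]] := f0 _ eps0.
exists (`|M| + 1); first by rewrite addr_ge0.
move=> t Mt; have /fM : M < t.
  by apply: le_lt_trans (ler_norm M) (lt_trans _ Mt); rewrite ltrDl.
by rewrite normr_id => /ltW.
Qed.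

Lemma time_avg_cvg_of_close (R : realType) (u v s dl : R -> R) (L m c : R) :
  0 <= L ->
  (forall T, mu.-integrable `[0, T] (EFin \o u)) ->
  (forall T, mu.-integrable `[0, T] (EFin \o v)) ->
  (forall T, mu.-integrable `[0, T] (EFin \o s)) ->
  (forall t, 0 <= s t) ->
  time_avg v T @[T --> +oo] --> m ->
  time_avg s T @[T --> +oo] --> c ->
  `|dl t| @[t --> +oo] --> 0 ->
  (forall t, `|dl t| <= 1 -> `|u t - v t| <= `|dl t| * (s t + L)) ->
  time_avg u T @[T --> +oo] --> m.
Proof.
move=> L0 ui vi si s0 vm sc dl0 uv_le.
suff uv0 : (time_avg u T - time_avg v T) @[T --> +oo] --> 0.
  have -> : time_avg u = fun T => (time_avg u T - time_avg v T) + time_avg v T.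
    by apply/funext => T; rewrite subrK.
  by rewrite -[m]add0r; exact: cvgD.
apply/cvgr0Pnorm_lt => e e0.
pose K := `|c| + 1 + L.
have K0 : 0 < K by rewrite /K -addrA ltr_pwDr // ltr_pwDl.
pose eps := e / (2 * K).
have eps0 : 0 < eps by rewrite divr_gt0 // mulr_gt0.
have epsK : eps * K = e / 2 by rewrite /eps; field; rewrite gt_eqF.
have min_gt0 : 0 < Num.min eps 1 by rewrite lt_min eps0 ltr01.
have [t0 t0_ge0 dl_small] := cvg0_pinfty_norm_le dl0 min_gt0.
have uv_eps t : t0 < t -> `|u t - v t| <= eps * (s t + L).
  move=> /dl_small; rewrite le_min => /andP[dl_eps dl1].
  by apply: le_trans (uv_le t dl1) _; rewrite ler_wpM2r // addr_ge0.
have savg_le : \forall T \near +oo, time_avg s T + L <= K.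
  move/cvgrPdist_lt : sc => /(_ 1 ltr01); apply: filterS => T.
  have := ler_norm (time_avg s T - c); rewrite (distrC c) /K.
  by have := ler_norm c; lra.
pose C := \int[mu]_(t in `[0, t0]) `|u t - v t|.
have head_small := pinfty_invr_mulr_lt C (divr_gt0 e0 (ltr0n _ 2)).
near=> T.
have t0T : t0 < T by near: T; apply: nbhs_pinfty_gt; rewrite num_real.
have := time_avg_dist_le (ui T) (vi T) (si T) t0_ge0 t0T (ltW eps0)
  (fun t => addr_ge0 (s0 t) L0) uv_eps.
have : T^-1 * C < e / 2 by near: T.
have : eps * (time_avg s T + L) <= eps * K.
  by apply: ler_wpM2l; [exact: ltW | near: T].
rewrite -/C; clearbody C; lra.
Unshelve. all: by end_near.
Qed.

Theorem theorem3p2 (d : measure_display) (Omega : measurableType d)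
  (R : realType) (P : probability Omega R) (X Y : R -> Omega -> R)
  (p : nat) (g : R -> R) :
  (forall t, 0 <= t -> measurable_fun setT (X t)) ->
  (forall t, 0 <= t -> measurable_fun setT (Y t)) ->
  (forall w, {within `[0, +oo[, continuous (fun t => X t w)}) ->
  (forall w, {within `[0, +oo[, continuous (fun t => Y t w)}) ->
  stationary_ergodic P Y ->
  {ae P, forall w, `|X t w - Y t w| @[t --> +oo] --> 0} ->
  (1 <= p)%N ->
  Cp p g ->
  (forall k : nat, (k <= p)%N ->
     P.-integrable setT (fun w => (derive1n k g (Y 0 w))%:E)) ->
  lipschitz_glob (derive1n p g) ->
  {ae P, forall w, time_avg (fun t => g (X t w)) T @[T --> +oo] -->
                   Rintegral P setT (fun w' => g (Y 0 w'))}.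
Proof.
move=> _ _ cX cY erg XY0 _ Cpg ig [L lipg].
have lipg' a b : `|derive1n p g a - derive1n p g b| <= `|L| * `|a - b|.
  by apply: le_trans (lipg a b) _; apply: ler_wpM2r => //; exact: ler_norm.
pose S y := \sum_(0 <= k < p) `|derive1n k.+1 g y|.
have cS : continuous S.
  apply: continuous_sum => k kp x; apply: continuous_comp; last exact: norm_continuous.
  exact: Cp_continuous_derive1n Cpg kp x.
have cg : continuous g := Cp_continuous_derive1n Cpg (leq0n p).
have iS : P.-integrable setT (fun w => (S (Y 0 w))%:E).
  exact: (integrable_sum_norm measurableT (fun k kp => ig k.+1 kp)).
have avg_g := erg g (measurable_realfun.continuous_measurable_fun cg) (ig 0%N isT).
have avg_S := erg S (measurable_realfun.continuous_measurable_fun cS) iS.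
apply: filterS3 avg_g avg_S XY0 => w gYw SYw XYw.
apply: (time_avg_cvg_of_close (normr_ge0 L) _ _ _ _ gYw SYw XYw) => [T|T|T|t|t XYt].
- by apply: continuous_itv_integrable => t; apply: continuous_comp (cX _ t) (cg _).
- by apply: continuous_itv_integrable => t; apply: continuous_comp (cY _ t) (cg _).
- by apply: continuous_itv_integrable => t; apply: continuous_comp (cY _ t) (cS _).
- exact: sumr_ge0.
- exact: lipschitz_derive1n_norm_subr_le (normr_ge0 L) Cpg.1 lipg' XYt.
Qed.
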